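(* Let $n\ge 2$. Then $\mathrm{A}=\Gamma^{\overline{01}}=\Gamma^{\overline{23}}$, where for a subspace $L\subseteq\mathrm{C}$ we write $\Gamma^{L}=\{T\in\mathrm{C}^\times: T L T^{-1}\subseteq L\}$.
   Context: Let $\mathrm{C}$ be either the real Clifford algebra $C\ell_{p,q}$ with $p+q=n$, or the complex Clifford algebra $C\ell(\mathbb{C}^n)$. It has identity $e$ and generators $e_1,\dots,e_n$ satisfying $e_ae_b+e_be_a=2\eta_{ab}e$. In the real case $\eta=\mathrm{diag}(1,\dots,1,-1,\dots,-1)$ with $p$ entries $+1$ and $q$ entries $-1$. In the complex case $\eta=I_n$. $\mathrm{C}^k$ is the grade-$k$ subspace, spanned by the products $e_{a_1}\cdots e_{a_k}$ with $a_1<\dots<a_k$. The reversion $U\mapsto\tilde U$ is the linear anti-automorphism acting on $\mathrm{C}^k$ as multiplication by $(-1)^{k(k-1)/2}$. For $m=0,1,2,3$ let $\mathrm{C}^{\overline m}=\bigoplus_{k\equiv m \pmod 4}\mathrm{C}^k$, and $\mathrm{C}^{\overline{kl}}=\mathrm{C}^{\overline k}\oplus\mathrm{C}^{\overline l}$. $\Gamma^{\overline{kl}}$ denotes $\Gamma^{L}$ with $L=\mathrm{C}^{\overline{kl}}$. $\mathrm{C}^\times$ is the group of invertible elements of $\mathrm{C}$. $\mathrm{Z}$ is the center of $\mathrm{C}$: $\mathrm{Z}=\mathrm{C}^0$ for $n$ even and $\mathrm{Z}=\mathrm{C}^0\oplus\mathrm{C}^n$ for $n$ odd. $\mathrm{Z}^\times$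 is the set of invertible elements of $\mathrm{Z}$. Define $\mathrm{A}:=\{T\in\mathrm{C}^\times:\ \tilde T T\in\mathrm{Z}^\times\}$. *)

From HB Require Import structures.
From mathcomp Require Import all_boot all_order all_algebra.
From mathcomp Require Import reals complex.
Set Implicit Arguments. Unset Strict Implicit. Unset Printing Implicit Defensive.
Import Order.TTheory GRing.Theory Num.Theory.
Local Open Scope ring_scope.

Section Clifford.
Variables (K : fieldType) (n : nat) (eta : 'I_n -> K).

(* An element U = sum_A U_A e_A of the Clifford algebra, A ranging over the
   subsets of {0..n-1}; e_A = e_{a_1} ... e_{a_k} with a_1 < ... < a_k. *)
Definition cl := {ffun {set 'I_n} -> K}.

Definition cl_add (x y : cl) : cl := [ffun A : {set 'I_n} => x A + y A].
Definition cl_scale (a : K) (x : cl) : cl := [ffun A : {set 'I_n} => a * x A].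

Definition blade (A : {set 'I_n}) : cl := [ffun B : {set 'I_n} => (B == A)%:R].
Definition cl_one : cl := blade set0.

Definition symdiff (A B : {set 'I_n}) : {set 'I_n} := (A :\: B) :|: (B :\: A).

(* e_A e_B = (-1)^{#{(a,b) in A x B | b < a}} (prod_{i in A /\ B} eta_i) e_{A symdiff B} *)
Definition blade_sign (A B : {set 'I_n}) : K :=
  (-1) ^+ #|[set ab : 'I_n * 'I_n | [&& ab.1 \in A, ab.2 \in B & (ab.2 < ab.1)%N]]|.
Definition blade_metric (A B : {set 'I_n}) : K := \prod_(i in A :&: B) eta i.

Definition cl_mul (x y : cl) : cl :=
  [ffun C : {set 'I_n} => \sum_(A : {set 'I_n}) \sum_(B : {set 'I_n} | symdiff A B == C)
               x A * y B * blade_sign A B * blade_metric A B].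

Definition cl_rev (x : cl) : cl := [ffun A : {set 'I_n} => (-1) ^+ 'C(#|A|, 2) * x A].

Definition in_grades (P : pred nat) (x : cl) : Prop :=
  forall A : {set 'I_n}, x A != 0 -> P #|A|.

(* C^{\bar m} (+) C^{\bar l}: grades k with k = m or k = l mod 4 *)
Definition in_grades_mod4 (m l : nat) : cl -> Prop :=
  in_grades (fun k => (k %% 4 == m) || (k %% 4 == l))%N.

Definition cl_inverse (x S : cl) : Prop := cl_mul x S = cl_one /\ cl_mul S x = cl_one.
Definition cl_invertible (x : cl) : Prop := exists S, cl_inverse x S.

Definition in_center_Z (x : cl) : Prop :=
  if odd n then in_grades (fun k => (k == 0) || (k == n))%N x
  else in_grades (fun k => k == 0)%N x.
Definition in_Zunits (x : cl) : Prop := in_center_Z x /\ cl_invertible x.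

Definition in_A (T : cl) : Prop := cl_invertible T /\ in_Zunits (cl_mul (cl_rev T) T).

Definition in_Gamma (L : cl -> Prop) (T : cl) : Prop :=
  exists S, cl_inverse T S /\ forall U, L U -> L (cl_mul (cl_mul T U) S).

End Clifford.

Definition eta_pq (R : fieldType) (n p : nat) (i : 'I_n) : R :=
  if (i < p)%N then 1 else -1.

Definition A_eq_Gammas (K : fieldType) (n : nat) (eta : 'I_n -> K) : Prop :=
  forall T : cl K n,
    (in_A eta T <-> in_Gamma eta (in_grades_mod4 0 1) T) /\
    (in_A eta T <-> in_Gamma eta (in_grades_mod4 2 3) T).

From HB Require Import structures.
From mathcomp Require Import all_boot all_order all_algebra.
From mathcomp Require Import reals complex.
From mathcomp Require Import zify ring.
Set Implicit Arguments. Unset Strict Implicit. Unset Printing Implicit Defensive.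
Import Order.TTheory GRing.Theory Num.Theory.
Local Open Scope ring_scope.

(* We work over an arbitrary field K with 2 <> 0 and a diagonal metric eta
   with nonzero entries; the real and complex algebras of the theorem are
   instances.  Multiplication on the blade basis is e_A e_B = w(A,B) e_{A Δ B}.
   1. Weights: w is a 2-cocycle (giving associativity) and
      w(B,A) = (-1)^(|A||B| + |A ∩ B|) w(A,B) (giving commutation rules).
   2. Algebra: the product is associative and unital, reversion is an
      anti-automorphism, and C^{01}, C^{23} are exactly the eigenspaces of
      reversion for the eigenvalues 1 and -1.
   3. Centre: Z is central; conversely an element commuting with all vectors
      e_i, or an element of C^{01} commuting with all blades of grade 2 and 3,
      lies in Z.
   4. For L an eigenspace of reversion: if rev(T) T is an invertible central
      element then T L T^-1 = L; if T L T^-1 <= L then rev(T) T commutes with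
      L.  Applying 3 to L = C^{01} (which contains the vectors) and to
      L = C^{23} (which contains the grade 2 and 3 blades) gives the theorem. *)

Lemma bin2D (m k : nat) : 'C(m + k, 2) = ('C(m, 2) + 'C(k, 2) + m * k)%N.
Proof.
elim: k => [|k IH]; first by rewrite addn0 muln0 bin0n !addn0.
rewrite addnS binS IH bin1 binS bin1; lia.
Qed.

Lemma odd_bin2_mod4 (k : nat) : odd 'C(k, 2) = ((k %% 4 == 2) || (k %% 4 == 3))%N.
Proof.
have even_bin2_mul4 q : ~~ odd 'C(q * 4, 2).
  have -> : (q * 4 = q.*2 + q.*2)%N by rewrite -addnn; lia.
  by rewrite bin2D !oddD addbb /= oddM odd_double.
rewrite {1}(divn_eq k 4) bin2D !oddD (negbTE (even_bin2_mul4 _)) !oddM andbF /= addbF.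
by case: (k %% 4)%N (ltn_pmod k (isT : 0 < 4)%N) => [|[|[|[|]]]].
Qed.

Lemma even_bin2_mod4 (k : nat) :
  ~~ odd 'C(k, 2) = ((k %% 4 == 0) || (k %% 4 == 1))%N.
Proof.
by rewrite odd_bin2_mod4; case: (k %% 4)%N (ltn_pmod k (isT : 0 < 4)%N) => [|[|[|[|]]]].
Qed.

(* Parity of 'C(_, 2) along c + 2k = a + b, the numerical shadow of
   |A Δ B| + 2|A ∩ B| = |A| + |B|. *)
Lemma odd_bin2_symdiff (a b c k : nat) : (c + k + k = a + b)%N ->
  odd 'C(c, 2) = odd ('C(a, 2) + 'C(b, 2) + (a * b + k)).
Proof.
move=> h; have := bin2D c (k + k); rewrite addnA h bin2D (bin2D k k).
move/(congr1 odd); rewrite !oddD !oddM !oddD !addbb andbb andbF addbF => e.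
by rewrite addbA e; case: (odd k); case: (odd 'C(c, 2)).
Qed.

Section SymmetricDifference.
Variable n : nat.
Local Notation sd := (@symdiff n).
Implicit Types A B C : {set 'I_n}.

Lemma in_symdiff A B x : (x \in sd A B) = (x \in A) (+) (x \in B).
Proof. by rewrite !inE; case: (x \in A); case: (x \in B). Qed.

Lemma symdiffC A B : sd A B = sd B A.
Proof. by apply/setP => x; rewrite !in_symdiff addbC. Qed.

Lemma symdiffA A B C : sd (sd A B) C = sd A (sd B C).
Proof. by apply/setP => x; rewrite !in_symdiff addbA. Qed.

Lemma symdiffK A B : sd (sd A B) B = A.
Proof. by apply/setP => x; rewrite !in_symdiff -addbA addbb addbF. Qed.

Lemma symdiffKl A B : sd A (sd A B) = B.
Proof. by apply/setP => x; rewrite !in_symdiff addbA addbb. Qed.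

Lemma symdiff0 A : sd A set0 = A.
Proof. by apply/setP => x; rewrite in_symdiff inE addbF. Qed.

Lemma symdiff0l A : sd set0 A = A.
Proof. by rewrite symdiffC symdiff0. Qed.

Lemma symdiff_eql A B C : (sd A B == C) = (A == sd C B).
Proof. by apply/eqP/eqP => [<-|->]; rewrite symdiffK. Qed.

Lemma symdiff_eqr A B C : (sd A B == C) = (B == sd A C).
Proof. by rewrite symdiffC symdiff_eql symdiffC. Qed.

Lemma card_symdiff A B : (#|sd A B| + #|A :&: B| + #|A :&: B| = #|A| + #|B|)%N.
Proof.
have disj : (A :\: B) :&: (B :\: A) = set0.
  by apply/setP => x; rewrite !inE; case: (x \in A); rewrite ?andbF.
have := cardsUI (A :\: B) (B :\: A); rewrite disj cards0 addn0 => cardU.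
by rewrite /symdiff cardU; have := cardsID B A; have := cardsID A B; rewrite setIC; lia.
Qed.

End SymmetricDifference.

Section BladeWeights.
Variables (K : fieldType) (n : nat) (eta : 'I_n -> K).
Local Notation sd := (@symdiff n).
Implicit Types A B C : {set 'I_n}.

Lemma signr_card (T : finType) (S : {set T}) :
  (-1) ^+ #|S| = \prod_(t : T) (-1) ^+ (t \in S) :> K.
Proof.
rewrite -prodr_const big_mkcond; apply: eq_bigr => t _.
by case: (t \in S); rewrite ?expr1 ?expr0.
Qed.

Lemma blade_signE A B : blade_sign K A B =
  \prod_(ab : 'I_n * 'I_n) (-1) ^+ [&& ab.1 \in A, ab.2 \in B & (ab.2 < ab.1)%N].
Proof. by rewrite /blade_sign signr_card; apply: eq_bigr => ab _; rewrite inE. Qed.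

Lemma blade_metricE A B : blade_metric eta A B =
  \prod_(i : 'I_n) (if (i \in A) && (i \in B) then eta i else 1).
Proof. by rewrite /blade_metric big_mkcond; apply: eq_bigr => i _; rewrite inE. Qed.

(* The structure constant of e_A e_B = weight A B * e_(A Δ B). *)
Definition weight A B : K := blade_sign K A B * blade_metric eta A B.

Lemma weight0l B : weight set0 B = 1.
Proof.
by rewrite /weight blade_signE blade_metricE !big1 ?mulr1 // => x _; rewrite in_set0.
Qed.

Lemma weight0r A : weight A set0 = 1.
Proof.
by rewrite /weight blade_signE blade_metricE !big1 ?mulr1 // => x _;
  rewrite in_set0 /= ?andbF.
Qed.

(* The weights form a 2-cocycle; this is associativity on basis blades. *)
Lemma weight_cocycle A B C :
  weight A B * weight (sd A B) C = weight B C * weight A (sd B C).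
Proof.
rewrite /weight !blade_signE !blade_metricE mulrACA -!big_split [RHS]mulrACA -!big_split.
congr (_ * _); apply: eq_bigr => i _; rewrite /= !in_symdiff.
- case: (i.1 \in A); case: (i.2 \in B); case: (i.1 \in B); case: (i.2 \in C);
  by case: (i.2 < i.1)%N; rewrite /= ?(expr0, expr1, mulrNN, mulr1, mul1r).
- by case: (i \in A); case: (i \in B); case: (i \in C); rewrite /= ?mulr1 ?mul1r.
Qed.

(* Swapping two blades costs (-1)^(|A||B| + |A ∩ B|): the pairs (a, b) in
   A x B with a <> b are counted once in either order, the diagonal ones never. *)
Lemma blade_sign_swap A B :
  blade_sign K A B * blade_sign K B A = (-1) ^+ (#|A| * #|B| + #|A :&: B|).
Proof.
pose diag := [set (i, i) | i in A :&: B].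
have card_diag : #|diag| = #|A :&: B| by apply: card_imset => i j [].
have in_diag (a b : 'I_n) : ((a, b) \in diag) = [&& a \in A, b \in B & a == b].
  rewrite /diag; apply/imsetP/and3P => [[i /setIP[iA iB] [-> ->]]|[aA bB /eqP ab]].
    by split; rewrite ?eqxx.
  by exists a; rewrite ?inE ?aA ab ?bB.
rewrite [blade_sign K B A]blade_signE.
rewrite (reindex_inj (h := fun ab : 'I_n * 'I_n => (ab.2, ab.1))) /=; last first.
  by case=> a b [c d] /= [-> ->].
rewrite blade_signE exprD -card_diag -cardsX !signr_card -!big_split.
apply: eq_bigr => -[a b] _ /=.
rewrite -!signr_addb in_diag inE /=; congr (_ ^+ _).
case: (a \in A); case: (b \in B) => //=.
by rewrite -val_eqE /=; case: ltngtP.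
Qed.

Lemma weight_swap A B :
  weight B A = (-1) ^+ (#|A| * #|B| + #|A :&: B|) * weight A B.
Proof.
rewrite /weight; have -> : blade_metric eta B A = blade_metric eta A B.
  by apply: eq_bigl => i; rewrite setIC.
have sign_sq : blade_sign K A B * blade_sign K A B = 1.
  by rewrite /blade_sign -expr2 sqrr_sign.
by rewrite -blade_sign_swap mulrACA sign_sq mul1r.
Qed.

Lemma weight_comm A B : ~~ odd (#|A| * #|B| + #|A :&: B|) -> weight A B = weight B A.
Proof. by move=> even; rewrite [RHS]weight_swap -signr_odd (negbTE even) mul1r. Qed.

Lemma weight_comm_even A B : (2 : K) != 0 -> (forall i, eta i != 0) ->
  weight A B = weight B A -> ~~ odd (#|A| * #|B| + #|A :&: B|).
Proof.
move=> two_nz eta_nz; rewrite [RHS]weight_swap -signr_odd.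
have w_nz : weight A B != 0.
  apply: mulf_neq0; first by rewrite signr_eq0.
  exact/prodf_neq0.
case: odd => //=; rewrite expr1 mulN1r => /eqP; rewrite -addr_eq0 -mulr2n.
by rewrite -mulr_natr mulf_eq0 (negbTE w_nz) (negbTE two_nz).
Qed.

End BladeWeights.

Section CliffordProduct.
Variables (K : fieldType) (n : nat) (eta : 'I_n -> K).
Local Notation cl := (cl K n).
Local Notation sd := (@symdiff n).
Local Notation weight := (weight eta).
Local Notation mul := (cl_mul eta).
Local Notation rev := (@cl_rev K n).
Local Notation scale := (@cl_scale K n).
Implicit Types (A B C D E : {set 'I_n}) (x y z : cl).

Lemma cl_mulE x y D :
  mul x y D = \sum_A \sum_B (sd A B == D)%:R * (x A * y B * weight A B).
Proof.
rewrite ffunE; apply: eq_bigr => A _; rewrite big_mkcond; apply: eq_bigr => B _.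
by case: eqP => _; rewrite ?mul1r ?mul0r // /weight !mulrA.
Qed.

Lemma sum_delta (F : {set 'I_n} -> K) A : \sum_C (A == C)%:R * F C = F A.
Proof.
rewrite (bigD1 A) //= eqxx mul1r big1 ?addr0 // => C /negbTE.
by rewrite eq_sym => ->; rewrite mul0r.
Qed.

Lemma sum_delta_r (F : {set 'I_n} -> K) A : \sum_C (C == A)%:R * F C = F A.
Proof. by under eq_bigr => C _ do rewrite eq_sym; rewrite sum_delta. Qed.

Lemma mulr_dsuml (f : {set 'I_n} -> {set 'I_n} -> K) c :
  (\sum_A \sum_B f A B) * c = \sum_A \sum_B f A B * c.
Proof. by rewrite mulr_suml; apply: eq_bigr => A _; rewrite mulr_suml. Qed.

Lemma mulr_dsumr (f : {set 'I_n} -> {set 'I_n} -> K) c :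
  c * (\sum_A \sum_B f A B) = \sum_A \sum_B c * f A B.
Proof. by rewrite mulr_sumr; apply: eq_bigr => A _; rewrite mulr_sumr. Qed.

Lemma cl_mul_expand_l x y z D : mul (mul x y) z D =
  \sum_A \sum_B \sum_E (sd (sd A B) E == D)%:R *
     (x A * y B * z E * (weight A B * weight (sd A B) E)).
Proof.
rewrite cl_mulE.
under eq_bigr => C _ do under eq_bigr => E _ do rewrite cl_mulE !mulr_dsuml mulr_dsumr.
under eq_bigr => C _ do rewrite exchange_big.
under eq_bigr => C _ do under eq_bigr => A _ do rewrite exchange_big.
rewrite exchange_big; under eq_bigr => A _ do rewrite exchange_big.
under eq_bigr => A _ do under eq_bigr => B _ do rewrite exchange_big.
apply: eq_bigr => A _; apply: eq_bigr => B _; apply: eq_bigr => E _.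
rewrite -[RHS](sum_delta (fun C => (sd C E == D)%:R *
   (x A * y B * z E * (weight A B * weight C E)))).
by apply: eq_bigr => C _; ring.
Qed.

Lemma cl_mul_expand_r x y z D : mul x (mul y z) D =
  \sum_A \sum_B \sum_E (sd A (sd B E) == D)%:R *
     (x A * y B * z E * (weight B E * weight A (sd B E))).
Proof.
rewrite cl_mulE.
under eq_bigr => A _ do
  under eq_bigr => F _ do rewrite cl_mulE mulr_dsumr mulr_dsuml mulr_dsumr.
under eq_bigr => A _ do rewrite exchange_big.
under eq_bigr => A _ do under eq_bigr => B _ do rewrite exchange_big.
apply: eq_bigr => A _; apply: eq_bigr => B _; apply: eq_bigr => E _.
rewrite -[RHS](sum_delta (fun F => (sd A F == D)%:R *
   (x A * y B * z E * (weight B E * weight A F)))).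
by apply: eq_bigr => F _; ring.
Qed.

(* Associativity follows from the cocycle identity term by term. *)
Lemma cl_mulA x y z : mul (mul x y) z = mul x (mul y z).
Proof.
apply/ffunP => D; rewrite cl_mul_expand_l cl_mul_expand_r.
by under eq_bigr => A _ do under eq_bigr => B _ do
  under eq_bigr => E _ do rewrite symdiffA weight_cocycle.
Qed.

Lemma mul_blade_r x B C : mul x (blade K B) C = x (sd C B) * weight (sd C B) B.
Proof.
rewrite cl_mulE (eq_bigr (fun A => (sd A B == C)%:R * (x A * weight A B))).
  by under eq_bigr => A _ do rewrite symdiff_eql; rewrite sum_delta_r.
move=> A _; rewrite -(sum_delta (fun D => (sd A D == C)%:R * (x A * weight A D))).
by apply: eq_bigr => D _; rewrite ffunE [D == B]eq_sym; ring.
Qed.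

Lemma mul_blade_l x B C : mul (blade K B) x C = x (sd B C) * weight B (sd B C).
Proof.
rewrite cl_mulE (eq_bigr (fun A => (B == A)%:R *
    \sum_D (sd A D == C)%:R * (x D * weight A D))).
  by rewrite sum_delta; under eq_bigr => D _ do rewrite symdiff_eqr; rewrite sum_delta_r.
move=> A _; rewrite mulr_sumr; apply: eq_bigr => D _.
by rewrite ffunE [A == B]eq_sym; ring.
Qed.

Lemma cl_mul1l x : mul (cl_one K n) x = x.
Proof. by apply/ffunP => C; rewrite mul_blade_l symdiff0l weight0l mulr1. Qed.

Lemma cl_mul1r x : mul x (cl_one K n) = x.
Proof. by apply/ffunP => C; rewrite mul_blade_r symdiff0 weight0r mulr1. Qed.

Lemma cl_mul_comm_weights x y :
  (forall A B, x A != 0 -> weight A B = weight B A) -> mul x y = mul y x.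
Proof.
move=> wAB; apply/ffunP => C; rewrite !cl_mulE [RHS]exchange_big /=.
apply: eq_bigr => A _; apply: eq_bigr => B _.
have [->|xA] := eqVneq (x A) 0; first by rewrite !(mul0r, mulr0).
by rewrite (wAB A B xA) symdiffC; ring.
Qed.

Lemma cl_revE x A : rev x A = (-1) ^+ 'C(#|A|, 2) * x A.
Proof. by rewrite ffunE. Qed.

(* Reversion on blades: rev(e_A e_B) = rev(e_B) rev(e_A). *)
Lemma weight_rev A B : (-1) ^+ 'C(#|sd A B|, 2) * weight A B =
  (-1) ^+ 'C(#|A|, 2) * (-1) ^+ 'C(#|B|, 2) * weight B A.
Proof.
rewrite [in RHS]weight_swap -signr_odd (odd_bin2_symdiff (card_symdiff A B)) signr_odd.
by rewrite !exprD; ring.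
Qed.

Lemma cl_rev_mul x y : rev (mul x y) = mul (rev y) (rev x).
Proof.
apply/ffunP => C; rewrite cl_revE !cl_mulE mulr_dsumr [RHS]exchange_big /=.
apply: eq_bigr => A _; apply: eq_bigr => B _; rewrite !cl_revE (symdiffC B A).
have [<-|_] := eqVneq (sd A B) C; last by rewrite !mul0r mulr0.
rewrite !mul1r.
transitivity (x A * y B * ((-1) ^+ 'C(#|sd A B|, 2) * weight A B)); first by ring.
by rewrite weight_rev; ring.
Qed.

Lemma cl_revK x : rev (rev x) = x.
Proof. by apply/ffunP => A; rewrite !cl_revE mulrA -expr2 sqrr_sign mul1r. Qed.

Lemma cl_rev1 : rev (cl_one K n) = cl_one K n.
Proof.
by apply/ffunP => A; rewrite cl_revE ffunE; case: eqP => [->|_];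
  rewrite ?cards0 ?mul1r ?mulr0.
Qed.

Lemma cl_rev_inverse x y : cl_inverse eta x y -> cl_inverse eta (rev x) (rev y).
Proof. by case=> xy yx; split; rewrite -cl_rev_mul ?xy ?yx cl_rev1. Qed.

Lemma cl_scaleE a x A : scale a x A = a * x A.
Proof. by rewrite ffunE. Qed.

Lemma cl_scale1 x : scale 1 x = x.
Proof. by apply/ffunP => A; rewrite cl_scaleE mul1r. Qed.

Lemma cl_mul_scalel a x y : mul (scale a x) y = scale a (mul x y).
Proof.
apply/ffunP => C; rewrite cl_scaleE !cl_mulE mulr_dsumr.
by apply: eq_bigr => A _; apply: eq_bigr => B _; rewrite cl_scaleE; ring.
Qed.

Lemma cl_mul_scaler a x y : mul x (scale a y) = scale a (mul x y).
Proof.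
apply/ffunP => C; rewrite cl_scaleE !cl_mulE mulr_dsumr.
by apply: eq_bigr => A _; apply: eq_bigr => B _; rewrite cl_scaleE; ring.
Qed.

Lemma cl_scale_inj a x y : a != 0 -> scale a x = scale a y -> x = y.
Proof.
move=> a_nz /ffunP xy; apply/ffunP => A.
by have := xy A; rewrite !cl_scaleE => /(mulfI a_nz).
Qed.

Lemma cl_rev_eigen e x :
  rev x = scale e x <-> forall A, x A != 0 -> (-1) ^+ 'C(#|A|, 2) = e.
Proof.
split => [/ffunP rx A xA|sgn]; first by have := rx A; rewrite cl_revE cl_scaleE => /(mulIf xA).
apply/ffunP => A; rewrite cl_revE cl_scaleE.
by have [->|/sgn ->] := eqVneq (x A) 0; rewrite ?mulr0.
Qed.

End CliffordProduct.

Section Centre.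
Variables (K : fieldType) (n : nat) (eta : 'I_n -> K).
Hypothesis two_nz : (2 : K) != 0.
Hypothesis eta_nz : forall i, eta i != 0.
Local Notation cl := (cl K n).
Local Notation mul := (cl_mul eta).
Local Notation rev := (@cl_rev K n).
Local Notation scale := (@cl_scale K n).
Implicit Types (A B : {set 'I_n}) (x y X : cl).

Lemma neqN11 : (-1 : K) != 1.
Proof. by rewrite -subr_eq0 -opprD oppr_eq0 -mulr2n. Qed.

Lemma signr_eq1 (b : bool) : (-1) ^+ b = 1 :> K <-> ~~ b.
Proof. by case: b; split => //= /eqP; rewrite expr1 (negbTE neqN11). Qed.

Lemma signr_eqN1 (b : bool) : (-1) ^+ b = -1 :> K <-> b.
Proof. by case: b; split => //= /eqP; rewrite expr0 eq_sym (negbTE neqN11). Qed.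

Lemma grades01_rev x : in_grades_mod4 0 1 x <-> rev x = scale 1 x.
Proof.
by rewrite cl_rev_eigen; split => sgn A /sgn; rewrite -signr_odd signr_eq1 even_bin2_mod4.
Qed.

Lemma grades23_rev x : in_grades_mod4 2 3 x <-> rev x = scale (-1) x.
Proof.
by rewrite cl_rev_eigen; split => sgn A /sgn; rewrite -signr_odd signr_eqN1 odd_bin2_mod4.
Qed.

Lemma blade_in_grades (P : pred nat) B : P #|B| -> in_grades P (blade K B).
Proof. by move=> PB A; rewrite ffunE; have [->|] := eqVneq A B; rewrite ?eqxx. Qed.

Lemma cards_eq_n A : (#|A| == n) = (A == setT).
Proof.
apply/idP/eqP => [/eqP full|->]; last by rewrite cardsT card_ord.
by apply/eqP; rewrite eqEcard subsetT cardsT card_ord full leqnn.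
Qed.

Lemma in_center_ZP X :
  in_center_Z X <-> forall A, X A != 0 -> A = set0 \/ (A = setT /\ odd n).
Proof.
rewrite /in_center_Z /in_grades.
case: (boolP (odd n)) => odd_n; split => supp A /supp;
  rewrite ?cards_eq0 ?cards_eq_n ?odd_n.
- by case/orP => /eqP; auto.
- by case=> [|[]] ->; rewrite eqxx ?orbT.
- by move/eqP; auto.
- by case=> [->|[_ //]]; rewrite eqxx.
Qed.

Lemma center_commute X y : in_center_Z X -> mul X y = mul y X.
Proof.
move/in_center_ZP => supp; apply: cl_mul_comm_weights => A B /supp.
case=> [->|[-> odd_n]]; apply: weight_comm; first by rewrite cards0 set0I cards0.
by rewrite setTI cardsT card_ord -[X in (_ + X)%N]mul1n -mulnDl oddM oddD odd_n.
Qed.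

Lemma commute_blade_even X A B :
  mul X (blade K B) = mul (blade K B) X -> X A != 0 ->
  ~~ odd (#|A| * #|B| + #|A :&: B|).
Proof.
move=> /ffunP /(_ (symdiff A B)) + XA.
rewrite mul_blade_r mul_blade_l symdiffK [symdiff A B]symdiffC symdiffKl.
by move/(mulfI XA); apply: weight_comm_even.
Qed.

Lemma card_setI1 A i : #|A :&: [set i]| = (i \in A).
Proof.
case: (boolP (i \in A)) => iA; first by rewrite (setIidPr _) ?sub1set ?cards1.
rewrite (_ : A :&: _ = set0) ?cards0 //.
by apply/setP => j; rewrite !inE; case: eqP => [->|]; rewrite ?(negbTE iA) ?andbF.
Qed.

(* An element commuting with all vectors e_i is central: a blade e_A in its
   support has |A| odd and no j outside A, so e_A is the odd pseudoscalar. *)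
Lemma center_of_commute_grade1 X :
  (forall i, mul X (blade K [set i]) = mul (blade K [set i]) X) -> in_center_Z X.
Proof.
move=> comm; apply/in_center_ZP => A XA.
have parity i : ~~ odd (#|A| + (i \in A)).
  by have := commute_blade_even (comm i) XA; rewrite cards1 muln1 card_setI1.
have [->|[i iA]] := set_0Vmem A; [by left | right].
have odd_A : odd #|A| by have := parity i; rewrite iA addn1 /= negbK.
suff AT : A = setT by rewrite AT cardsT card_ord in odd_A.
apply/setP => j; rewrite inE; apply/negPn/negP => jA.
by have := parity j; rewrite (negbTE jA) addn0 odd_A.
Qed.

(* An element of C^{01} commuting with all blades of grades 2 and 3 is
   central: bivectors e_i e_j force the support onto e_0 and the pseudoscalar;
   the latter lies in C^{01} only for n = 0, 1 mod 4, and for n = 0 mod 4 it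
   anticommutes with trivectors. *)
Lemma center_of_commute_grade23 X : in_grades_mod4 0 1 X ->
  (forall B, #|B| = 2 \/ #|B| = 3 -> mul X (blade K B) = mul (blade K B) X) ->
  in_center_Z X.
Proof.
move=> X01 comm; apply/in_center_ZP => A XA.
have [->|[i iA]] := set_0Vmem A; [by left | right].
have AT : A = setT.
  apply/setP => j; rewrite inE; apply/negPn/negP => jA.
  have ij : i != j by apply: contraNneq jA => <-.
  have card_ij : #|[set i; j]| = 2 by rewrite cards2 ij.
  have A_ij : A :&: [set i; j] = [set i].
    apply/setP => k; rewrite !inE; case: (eqVneq k i) => [->|_]; first by rewrite iA.
    by case: (eqVneq k j) => [->|_]; rewrite ?(negbTE jA) ?andbF.
  have := commute_blade_even (comm _ (or_introl card_ij)) XA.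
  by rewrite A_ij card_ij cards1 addn1 /= oddM andbF.
split => //; rewrite AT in XA; apply/negPn/negP => even_n.
have n_ge3 : (3 <= n)%N.
  have := ltn_ord i; have n2 : (n %% 2 = 0)%N by rewrite modn2 (negbTE even_n).
  by have := X01 _ XA; rewrite cardsT card_ord => /orP[] /eqP; lia.
pose B3 := [set widen_ord n_ge3 k | k : 'I_3].
have card_B3 : #|B3| = 3.
  by rewrite card_imset ?card_ord // => k l /(congr1 val) /= /val_inj.
have := commute_blade_even (comm _ (or_intror card_B3)) XA.
by rewrite setTI cardsT card_ord card_B3 oddD oddM (negbTE even_n).
Qed.

End Centre.

Section CliffordGroups.
Variables (K : fieldType) (n : nat) (eta : 'I_n -> K).
Local Notation cl := (cl K n).
Local Notation one := (cl_one K n).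
Local Notation mul := (cl_mul eta).
Local Notation rev := (@cl_rev K n).
Local Notation scale := (@cl_scale K n).
Implicit Types (x y z T S U : cl).

Lemma cl_mulKl x y z : mul x y = one -> mul x (mul y z) = z.
Proof. by move=> xy; rewrite -cl_mulA xy cl_mul1l. Qed.

Lemma rev_norm_invertible T S :
  cl_inverse eta T S -> cl_inverse eta (mul (rev T) T) (mul S (rev S)).
Proof.
move=> TS; have [TS' ST'] := cl_rev_inverse TS; case: TS => TS ST.
by split; rewrite !cl_mulA ?(cl_mulKl _ TS) ?(cl_mulKl _ ST').
Qed.

Section ReversionEigenspace.
Variables (L : cl -> Prop) (e : K).
Hypothesis L_eigen : forall U, L U <-> rev U = scale e U.

(* If rev(T) T is central and invertible, conjugation by T
   commutes with reversion, hence preserves its eigenspace L. *)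
Lemma A_sub_Gamma T : in_A eta T -> in_Gamma eta L T.
Proof.
case=> [[S [TS ST]] [XZ [Y [XY YX]]]].
have [TS' ST'] := cl_rev_inverse (conj TS ST).
set X := mul (rev T) T in XZ XY YX.
have X_comm W : mul X W = mul W X by exact: center_commute.
have revT : rev T = mul X S by rewrite /X cl_mulA TS cl_mul1r.
have revS : rev S = mul T Y.
  have -> : T = mul (rev S) X by rewrite /X -cl_mulA ST' cl_mul1l.
  by rewrite cl_mulA XY cl_mul1r.
exists S; split => // U LU; apply/L_eigen.
rewrite !cl_rev_mul ((L_eigen U).1 LU) cl_mul_scalel cl_mul_scaler; congr (scale e _).
rewrite revT revS !cl_mulA; congr (mul T _).
by rewrite TS cl_mul1r revT -(cl_mulA _ U X S) -X_comm cl_mulA (cl_mulKl _ YX).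
Qed.

Hypothesis e_nz : e != 0.

(* If T normalises L and e <> 0, then applying reversion to T U T^-1 shows
   that rev(T) T commutes with every element of L. *)
Lemma Gamma_rev_norm_commute T U :
  in_Gamma eta L T -> L U -> mul (mul (rev T) T) U = mul U (mul (rev T) T).
Proof.
case=> S [[TS ST] normL] LU; have [TS' ST'] := cl_rev_inverse (conj TS ST).
have conj_rev : mul (rev S) (mul U (rev T)) = mul (mul T U) S.
  have := (L_eigen _).1 (normL U LU).
  rewrite !cl_rev_mul ((L_eigen U).1 LU) cl_mul_scalel cl_mul_scaler.
  exact: cl_scale_inj.
have := congr1 (fun V => mul (rev T) (mul V T)) conj_rev; rewrite /= !cl_mulA.
by rewrite (cl_mulKl _ TS') ST cl_mul1r => ->.
Qed.

End ReversionEigenspace.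

Hypothesis two_nz : (2 : K) != 0.
Hypothesis eta_nz : forall i, eta i != 0.

Let N1_neq0 : (-1 : K) != 0. Proof. by rewrite oppr_eq0 oner_eq0. Qed.

Lemma in_A_of_central_norm L T :
  in_Gamma eta L T -> in_center_Z (mul (rev T) T) -> in_A eta T.
Proof.
case=> S [TS _] normZ; split; first by exists S.
by split; last by exists (mul S (rev S)); exact: rev_norm_invertible.
Qed.

(* T in Gamma^{01}: its norm commutes with all vectors, hence is central. *)
Lemma Gamma01_sub_A T : in_Gamma eta (in_grades_mod4 0 1) T -> in_A eta T.
Proof.
move=> GT; apply: (in_A_of_central_norm GT).
apply: center_of_commute_grade1 => // i.
apply: (Gamma_rev_norm_commute (grades01_rev two_nz) (oner_neq0 K)) => //.
by apply: blade_in_grades; rewrite cards1.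
Qed.

(* T in Gamma^{23}: its norm is reversion-fixed and commutes with all blades
   of grades 2 and 3, hence is central. *)
Lemma Gamma23_sub_A T : in_Gamma eta (in_grades_mod4 2 3) T -> in_A eta T.
Proof.
move=> GT; apply: (in_A_of_central_norm GT).
apply: center_of_commute_grade23 => //.
  by apply/(grades01_rev two_nz); rewrite cl_scale1 cl_rev_mul cl_revK.
move=> B cardB; apply: (Gamma_rev_norm_commute (grades23_rev two_nz) N1_neq0) => //.
by apply: blade_in_grades; case: cardB => ->.
Qed.

Theorem A_eq_Gammas_diag : A_eq_Gammas eta.
Proof.
move=> T; split; split.
- exact: (A_sub_Gamma (grades01_rev two_nz)).
- exact: Gamma01_sub_A.
- exact: (A_sub_Gamma (grades23_rev two_nz)).
- exact: Gamma23_sub_A.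
Qed.

End CliffordGroups.

(* Real case Cl_{p,q} over R (p+q = n) and complex case Cl(C^n) over C = R[i];
   both have characteristic 0 and metric entries +-1, and the identity holds
   for every n. *)
Theorem mainTheorem6 (R : realType) (n p q : nat) :
  (2 <= n)%N -> (p + q)%N = n ->
  A_eq_Gammas (@eta_pq R n p) /\ A_eq_Gammas (fun _ : 'I_n => (1 : R[i])).
Proof.
move=> _ _; split; apply: A_eq_Gammas_diag; rewrite ?pnatr_eq0 // => i.
- by rewrite /eta_pq; case: ifP; rewrite ?oppr_eq0 oner_eq0.
- exact: oner_neq0.
Qed.
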